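(* Let $k\ge 1$ be an integer and let $\bm\delta=(\delta_1,\dots,\delta_k)$ be any fixed sequence of positive reals. Then \[C_k(n,\dots,n)=\begin{cases}\Omega\left(n^{\lfloor (k+1)/3\rfloor+1}\right), & \text{if } k\equiv 0,2 \pmod 3,\\ \Omega\left(n^{(k-1)/3}\,u_2(n)\right), & \text{if } k\equiv 1\pmod 3.\end{cases}\]
   Context: For a fixed $\bm\delta=(\delta_1,\dots,\delta_k)$ and sets $P_1,\dots,P_{k+1}\subseteq\mathbb{R}^2$, let $C_k(P_1,\dots,P_{k+1})$ be the number of $(k+1)$-tuples $(p_1,\dots,p_{k+1})$ with $p_i\in P_i$ for all $i$, $\|p_i-p_{i+1}\|=\delta_i$ for all $i\in[k]$, and $p_i\ne p_j$ for $i\ne j$. Let $C_k(n_1,\dots,n_{k+1})$ be the maximum of $C_k(P_1,\dots,P_{k+1})$ over all $P_1,\dots,P_{k+1}\subseteq\mathbb{R}^2$ with $|P_i|\le n_i$. $u_2(n)$ denotes the maximum number of pairs of points at distance exactly $1$ in a set of $n$ points in $\mathbb{R}^2$. Implicit constants may depend on $k$ and $\bm\delta$. *)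

From Stdlib Require Import Reals Lra Lia List ListDec Arith Bool ClassicalEpsilon.
Import ListNotations.
Open Scope R_scope.

Definition pt : Type := (R * R)%type.

Definition pt_eq_dec (p q : pt) : {p = q} + {p <> q}.
Proof.
  destruct p as [a b], q as [c d].
  destruct (Req_EM_T a c) as [H1|H1]; destruct (Req_EM_T b d) as [H2|H2];
    subst; [left; reflexivity | right; intro H; inversion H; auto ..].
Defined.

Definition dist (p q : pt) : R :=
  sqrt ((fst p - fst q) ^ 2 + (snd p - snd q) ^ 2).

Definition distb (p q : pt) (d : R) : bool :=
  if Req_EM_T (dist p q) d then true else false.

Fixpoint tuples (P : nat -> list pt) (m : nat) : list (list pt) :=
  match m with
  | O => map (fun p => [p]) (P O)
  | S m' => flat_map (fun t => map (fun p => t ++ [p]) (P m)) (tuples P m')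
  end.

Definition valid_tuple (k : nat) (delta : nat -> R) (t : list pt) : bool :=
  forallb (fun i => distb (nth i t (0,0)) (nth (S i) t (0,0)) (delta i)) (seq 0 k)
  && (if NoDup_dec pt_eq_dec t then true else false).

(* C_k(P_1,...,P_{k+1}) with P_{i+1} = P i (0-indexed). *)
Definition Ck_count (k : nat) (delta : nat -> R) (P : nat -> list pt) : nat :=
  length (filter (valid_tuple k delta) (tuples P k)).

(* The maximum of a set of naturals (classical choice); it is the intended
   value whenever the maximum exists. *)
Definition maxnat (S : nat -> Prop) : nat :=
  epsilon (inhabits 0%nat) (fun m => S m /\ forall m', S m' -> (m' <= m)%nat).

Definition Ck_max (k : nat) (delta : nat -> R) (n : nat) : nat :=
  maxnat (fun m => exists P : nat -> list pt,
            (forall i, (i <= k)%nat -> NoDup (P i) /\ (length (P i) <= n)%nat)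
            /\ Ck_count k delta P = m).

Definition unit_pairs (P : list pt) : nat :=
  length (filter (fun ij => Nat.ltb (fst ij) (snd ij)
                    && distb (nth (fst ij) P (0,0)) (nth (snd ij) P (0,0)) 1)
            (list_prod (seq 0 (length P)) (seq 0 (length P)))).

Definition u2 (n : nat) : nat :=
  maxnat (fun m => exists P : list pt,
            NoDup P /\ (length P <= n)%nat /\ unit_pairs P = m).

From Stdlib Require Import Reals Lra Lia List ListDec Bool ZArith FinFun.
From Stdlib Require Import Classical ClassicalEpsilon FunctionalExtensionality.
Import ListNotations.
Open Scope R_scope.

(* Chains are assembled from "hubs", fixed points spaced along the x-axis. Leaving a hub X,
   the chain visits a free point p on the circle of radius delta_i around X, at one of n small
   angles, then the point q with |pq| = delta_(i+1) and |qY| = delta_(i+2), where the next hub Y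
   lies at distance sqrt (delta_(i+1)^2 + delta_(i+2)^2) from the position p would have at angle
   0; the two circles then meet near a right angle, so q is determined by p. Every three steps
   thus contribute a factor n. For k = 3m + 2 the chain starts with one more free point on a
   circle around the first hub, giving n^(m+2); for k = 3m + 3 a forced step is prepended.
   For k = 1 (mod 3) the chain starts with a unit-distance pair scaled by delta_1, whose second
   point must lie near a fixed position: cut the plane into small cells, keep by pigeonhole the
   pairs whose second point lies in one residue class of cells modulo a fixed period, and
   translate each such cell onto one fixed cell. The period forces all second points adjacent
   to a common first point into a single cell, so first points move consistently, and a generic
   horizontal perturbation of the translations avoids collisions; only a constant fraction of
   the u_2(n) pairs is lost. All points of a chain increase lexicographically, hence are
   distinct. *)

(** * Counting chains *)

Lemma bounded_max_exists (P : nat -> Prop) (B : nat) :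
  (exists m, P m) -> (forall m, P m -> (m <= B)%nat) ->
  exists M, P M /\ forall m, P m -> (m <= M)%nat.
Proof.
  revert P; induction B as [|B IH]; intros P [m0 Hm0] Hbound.
  - exists m0; split; [exact Hm0|]. intros m Hm.
    pose proof (Hbound m Hm); pose proof (Hbound m0 Hm0); lia.
  - destruct (classic (P (S B))) as [HB|HB].
    + exists (S B); split; assumption.
    + apply IH; [now exists m0|]. intros m Hm.
      pose proof (Hbound m Hm).
      destruct (Nat.eq_dec m (S B)) as [->|]; [contradiction|lia].
Qed.

Lemma maxnat_spec (P : nat -> Prop) (B : nat) :
  (exists m, P m) -> (forall m, P m -> (m <= B)%nat) ->
  P (maxnat P) /\ forall m, P m -> (m <= maxnat P)%nat.
Proof.
  intros Hex Hbound. unfold maxnat. apply epsilon_spec, (bounded_max_exists P B Hex Hbound).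
Qed.

Lemma length_tuples_le (P : nat -> list pt) (n m : nat) :
  (forall i, (i <= m)%nat -> (length (P i) <= n)%nat) ->
  (length (tuples P m) <= n ^ S m)%nat.
Proof.
  induction m as [|m IH]; intros HP; cbn [tuples].
  - rewrite length_map. specialize (HP O (le_n _)). simpl. lia.
  - rewrite (flat_map_constant_length (c := length (P (S m))))
      by (intros; apply length_map).
    specialize (IH (fun i Hi => HP i ltac:(lia))). specialize (HP (S m) (le_n _)).
    rewrite Nat.pow_succ_r'. rewrite Nat.mul_comm. apply Nat.mul_le_mono; assumption.
Qed.

Lemma In_tuples (P : nat -> list pt) (m : nat) (t : list pt) :
  length t = S m -> (forall i, (i <= m)%nat -> In (nth i t (0,0)) (P i)) ->
  In t (tuples P m).
Proof.
  revert t; induction m as [|m IH]; intros t Hlen Hin.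
  - destruct t as [|p [|]]; try discriminate. apply (in_map (fun p => [p])), (Hin O (le_n _)).
  - destruct (exists_last (l := t)) as [t' [p ->]]; [now intros ->|].
    rewrite length_app in Hlen. cbn in Hlen.
    apply in_flat_map. exists t'. split.
    + apply IH; [lia|]. intros i Hi. specialize (Hin i ltac:(lia)).
      now rewrite app_nth1 in Hin by lia.
    + apply (in_map (fun q => t' ++ [q])). specialize (Hin (S m) (le_n _)).
      rewrite app_nth2 in Hin by lia. now replace (S m - length t')%nat with O in Hin by lia.
Qed.

Lemma Ck_count_le_Ck_max (k : nat) (d : nat -> R) (n : nat) (P : nat -> list pt) :
  (forall i, (i <= k)%nat -> NoDup (P i) /\ (length (P i) <= n)%nat) ->
  (Ck_count k d P <= Ck_max k d n)%nat.
Proof.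
  intros HP. unfold Ck_max.
  apply (maxnat_spec _ (n ^ S k)); [| |now exists P].
  - now exists (Ck_count k d P), P.
  - intros m [P' [HP' <-]]. unfold Ck_count.
    eapply Nat.le_trans; [apply filter_length_le|].
    apply length_tuples_le. intros i Hi. apply HP', Hi.
Qed.

Lemma Ck_max_ext (k : nat) (d d' : nat -> R) (n : nat) :
  (forall i, (i < k)%nat -> d i = d' i) -> Ck_max k d n = Ck_max k d' n.
Proof.
  intros Hd.
  assert (Hvalid : valid_tuple k d = valid_tuple k d').
  { apply functional_extensionality. intros t. unfold valid_tuple. f_equal.
    assert (Hseq : forall i, In i (seq 0 k) -> d i = d' i)
      by (intros i Hi%in_seq; apply Hd; lia).
    induction (seq 0 k) as [|i l IH]; [reflexivity|]. cbn.
    rewrite (Hseq i (or_introl eq_refl)), IH by (intros; apply Hseq; now right).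
    reflexivity. }
  unfold Ck_max, Ck_count. now rewrite Hvalid.
Qed.

Definition lex_lt (p q : pt) : Prop :=
  fst p < fst q \/ (fst p = fst q /\ snd p < snd q).

Lemma lex_lt_trans (p q r : pt) : lex_lt p q -> lex_lt q r -> lex_lt p r.
Proof. unfold lex_lt. intros [|[]] [|[]]; (left; lra) || (right; split; lra). Qed.

Lemma lex_lt_irrefl (p : pt) : ~ lex_lt p p.
Proof. unfold lex_lt. lra. Qed.

Lemma lex_lt_total (p q : pt) : p <> q -> lex_lt p q \/ lex_lt q p.
Proof.
  destruct p as [x y], q as [x' y']; unfold lex_lt; cbn. intros Hne.
  destruct (Rtotal_order x x') as [|[<-|]]; [left; now left| |right; now left].
  destruct (Rtotal_order y y') as [|[<-|]]; [left; now right|easy|right; now right].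
Qed.

Definition dshift (m : nat) (d : nat -> R) : nat -> R := fun i => d (m + i)%nat.

Fixpoint walk (d : nat -> R) (l : list pt) : Prop :=
  match l with
  | p :: (q :: _) as l' => dist p q = d O /\ lex_lt p q /\ walk (dshift 1 d) l'
  | _ => True
  end.

Lemma walk_nth_dist (d : nat -> R) (l : list pt) : walk d l ->
  forall i, (S i < length l)%nat -> dist (nth i l (0,0)) (nth (S i) l (0,0)) = d i.
Proof.
  revert d; induction l as [|p [|q l] IH]; intros d Hw i Hi; cbn in Hi; try lia.
  destruct Hw as [Hpq [_ Hw]]. destruct i as [|i]; [exact Hpq|].
  apply (IH (dshift 1 d) Hw i). cbn. lia.
Qed.

Lemma walk_lex_lt_hd (d : nat -> R) (p : pt) (l : list pt) :
  walk d (p :: l) -> forall q, In q l -> lex_lt p q.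
Proof.
  revert d p; induction l as [|q l IH]; intros d p Hw r Hr; [destruct Hr|].
  destruct Hw as [_ [Hpq Hw]]. destruct Hr as [<-|Hr]; [exact Hpq|].
  exact (lex_lt_trans _ _ _ Hpq (IH _ _ Hw r Hr)).
Qed.

Lemma walk_NoDup (d : nat -> R) (l : list pt) : walk d l -> NoDup l.
Proof.
  revert d; induction l as [|p l IH]; intros d Hw; constructor.
  - intros Hp. exact (lex_lt_irrefl p (walk_lex_lt_hd d p l Hw p Hp)).
  - destruct l as [|q l]; [constructor|]. exact (IH _ (proj2 (proj2 Hw))).
Qed.

Lemma valid_tuple_walk (k : nat) (d : nat -> R) (t : list pt) :
  length t = S k -> walk d t -> valid_tuple k d t = true.
Proof.
  intros Hlen Hw. unfold valid_tuple. apply andb_true_intro. split.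
  - apply forallb_forall. intros i Hi%in_seq. unfold distb.
    destruct (Req_EM_T _ _) as [|Hne]; [reflexivity|].
    exfalso. apply Hne, (walk_nth_dist d t Hw). lia.
  - destruct (NoDup_dec pt_eq_dec t) as [|Hn]; [reflexivity|].
    exact (False_ind _ (Hn (walk_NoDup d t Hw))).
Qed.

Definition realizes (k : nat) (d : nat -> R) (Cs W : list (list pt)) : Prop :=
  NoDup W /\
  forall t, In t W -> length t = S k /\ walk d t /\ Forall2 (@In pt) t Cs.

Lemma Forall2_In_nth (t : list pt) (Cs : list (list pt)) : Forall2 (@In pt) t Cs ->
  forall i, (i < length t)%nat -> In (nth i t (0,0)) (nth i Cs []).
Proof.
  induction 1 as [|p C t Cs Hp _ IH]; intros i Hi; cbn in Hi; [lia|].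
  destruct i; [exact Hp|]. apply IH. lia.
Qed.

Lemma Ck_max_ge_realizes (k : nat) (d : nat -> R) (n : nat) (Cs W : list (list pt)) :
  realizes k d Cs W -> Forall (fun C => (length C <= n)%nat) Cs ->
  (length W <= Ck_max k d n)%nat.
Proof.
  intros [HW Ht] Hsmall.
  set (P i := nodup pt_eq_dec (nth i Cs [])).
  apply Nat.le_trans with (Ck_count k d P).
  - apply NoDup_incl_length; [exact HW|]. intros t Hin.
    destruct (Ht t Hin) as [Hlen [Hw HCs]].
    apply filter_In. split; [|exact (valid_tuple_walk k d t Hlen Hw)].
    apply In_tuples; [exact Hlen|]. intros i Hi.
    apply nodup_In, Forall2_In_nth; [exact HCs|lia].
  - apply Ck_count_le_Ck_max. intros i _. split; [apply NoDup_nodup|].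
    apply Nat.le_trans with (length (nth i Cs [])).
    + apply NoDup_incl_length; [apply NoDup_nodup|]. intros x. apply nodup_In.
    + destruct (Nat.lt_ge_cases i (length Cs)) as [Hi|Hi].
      * exact (proj1 (Forall_forall _ _) Hsmall _ (nth_In _ _ Hi)).
      * rewrite nth_overflow by assumption. cbn. lia.
Qed.

Lemma NoDup_flat_map {A B} (g : A -> list B) (l : list A) :
  NoDup l -> (forall a, NoDup (g a)) ->
  (forall a a' b, In b (g a) -> In b (g a') -> a = a') -> NoDup (flat_map g l).
Proof.
  intros Hl Hg Hdisj. induction Hl as [|a l Ha _ IH]; cbn; [constructor|].
  apply NoDup_app; [apply Hg|exact IH|]. intros b Hb Hb'.
  apply in_flat_map in Hb' as [a' [Ha' Hb']].
  apply Ha. now rewrite (Hdisj a a' b Hb Hb').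
Qed.

Definition prepend (f : pt -> list pt) (W : list (list pt)) : list (list pt) :=
  flat_map (fun t => map (fun q => q :: t) (f (hd (0,0) t))) W.

Lemma realizes_prepend (k : nat) (d : nat -> R) (Cs W : list (list pt))
    (f : pt -> list pt) (m : nat) :
  realizes k (dshift 1 d) Cs W ->
  (forall p, NoDup (f p) /\ length (f p) = m /\
     forall q, In q (f p) -> dist q p = d O /\ lex_lt q p) ->
  realizes (S k) d (flat_map f (hd [] Cs) :: Cs) (prepend f W) /\
  length (prepend f W) = (length W * m)%nat.
Proof.
  intros [HW Ht] Hf. split; [split|].
  - apply NoDup_flat_map; [exact HW| |].
    + intros t. apply Injective_map_NoDup; [intros q q' E; now injection E|apply Hf].
    + intros t t' x Hx Hx'. apply in_map_iff in Hx as [q [<- _]].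
      apply in_map_iff in Hx' as [q' [E _]]. now injection E.
  - intros t' Hin. apply in_flat_map in Hin as [t [Hin Hq]].
    apply in_map_iff in Hq as [q [<- Hq]].
    destruct (Ht t Hin) as [Hlen [Hw HCs]].
    destruct HCs as [|p C t0 Cs' Hp HCs]; [discriminate|].
    destruct (Hf p) as [_ [_ Hfp]]. destruct (Hfp q Hq) as [Hqp Hlt].
    repeat split; cbn in *; auto.
    constructor; [|now constructor]. apply in_flat_map. now exists p.
  - unfold prepend. rewrite (flat_map_constant_length (c := m)); [reflexivity|].
    intros t _. rewrite length_map. apply Hf.
Qed.

(** * Circles and triangles *)

Lemma dist_eq_sqr (p q : pt) (a : R) :
  0 <= a -> (fst p - fst q)^2 + (snd p - snd q)^2 = a^2 -> dist p q = a.
Proof. intros Ha E. unfold dist. rewrite E. now apply sqrt_pow2. Qed.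

Lemma dist_sqr (p q : pt) : dist p q ^ 2 = (fst p - fst q)^2 + (snd p - snd q)^2.
Proof.
  unfold dist. rewrite <- Rsqr_pow2. apply Rsqr_sqrt.
  pose proof (pow2_ge_0 (fst p - fst q)); pose proof (pow2_ge_0 (snd p - snd q)); lra.
Qed.

Lemma dist_sym (p q : pt) : dist p q = dist q p.
Proof. unfold dist. f_equal. ring. Qed.

Lemma dist_coord_le (p q : pt) (a : R) :
  dist p q = a -> Rabs (fst p - fst q) <= a /\ Rabs (snd p - snd q) <= a.
Proof.
  intros Hd. pose proof (dist_sqr p q) as Hsq. rewrite Hd in Hsq.
  assert (0 <= a) by (rewrite <- Hd; apply sqrt_pos).
  pose proof (pow2_ge_0 (fst p - fst q)); pose proof (pow2_ge_0 (snd p - snd q)).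
  split; apply Rabs_le; split; nra.
Qed.

Lemma Rdiv_le_of_le_mul (a b c : R) : 0 < c -> a <= b * c -> a / c <= b.
Proof.
  intros Hc H. apply (Rmult_le_reg_r c); [exact Hc|].
  unfold Rdiv. now rewrite Rmult_assoc, Rinv_l, Rmult_1_r by lra.
Qed.

Lemma Rabs_le_inv (x a : R) : Rabs x <= a -> - a <= x <= a.
Proof. unfold Rabs. destruct (Rcase_abs x); lra. Qed.

Definition in_box (c : pt) (r : R) (p : pt) : Prop :=
  Rabs (fst p - fst c) <= r /\ Rabs (snd p - snd c) <= r.

(* Rational parametrization of the circle of radius [|a|] around [X], with [t = tan(theta/2)]. *)
Definition spoke (a t : R) (X : pt) : pt :=
  (fst X + a * ((1 - t^2) / (1 + t^2)), snd X + a * (2 * t / (1 + t^2))).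

Lemma dist_spoke (a t : R) (X : pt) : dist X (spoke a t X) = Rabs a.
Proof.
  apply dist_eq_sqr; [apply Rabs_pos|]. rewrite pow2_abs. unfold spoke; cbn [fst snd].
  field. apply Rgt_not_eq. nra.
Qed.

Lemma circle_fst_pos (t : R) : 0 <= t < 1 -> 0 < (1 - t^2) / (1 + t^2).
Proof. intros Ht. apply Rdiv_lt_0_compat; nra. Qed.

Lemma lex_lt_spoke (a t : R) (X : pt) : 0 < a -> 0 <= t < 1 -> lex_lt X (spoke a t X).
Proof.
  intros Ha Ht. left. unfold spoke; cbn [fst snd].
  pose proof (circle_fst_pos t Ht). nra.
Qed.

Lemma lex_lt_spoke_opp (a t : R) (X : pt) :
  0 < a -> 0 <= t < 1 -> lex_lt (spoke (- a) t X) X.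
Proof.
  intros Ha Ht. left. unfold spoke; cbn [fst snd].
  pose proof (circle_fst_pos t Ht). nra.
Qed.

Lemma spoke_inj (a t t' : R) (X : pt) :
  a <> 0 -> 0 <= t < 1 -> 0 <= t' < 1 -> spoke a t X = spoke a t' X -> t = t'.
Proof.
  intros Ha Ht Ht' E. apply (f_equal snd) in E. unfold spoke in E; cbn [snd] in E.
  assert (Hq : 2 * t / (1 + t^2) = 2 * t' / (1 + t'^2)).
  { apply (Rmult_eq_reg_l a); [lra|assumption]. }
  assert (Hprod : (t - t') * (1 - t * t') = 0).
  { apply (Rmult_eq_compat_r ((1 + t^2) * (1 + t'^2))) in Hq.
    field_simplify in Hq; nra. }
  apply Rmult_integral in Hprod as [|]; nra.
Qed.

Lemma spoke_in_box (a t : R) (X : pt) :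
  0 < a -> 0 <= t <= 1 -> in_box (fst X + a, snd X) (2 * a * t) (spoke a t X).
Proof.
  intros Ha Ht. unfold in_box, spoke; cbn [fst snd].
  assert (H1 : 1 <= 1 + t^2) by nra.
  replace (fst X + a * ((1 - t^2) / (1 + t^2)) - (fst X + a))
    with (- (a * (2 * t^2 / (1 + t^2)))) by (field; lra).
  replace (snd X + a * (2 * t / (1 + t^2)) - snd X) with (a * (2 * t / (1 + t^2))) by ring.
  assert (E1 : 0 <= 2 * t^2 / (1 + t^2) <= 2 * t).
  { split; [apply Rle_mult_inv_pos; nra|apply Rdiv_le_of_le_mul; nra]. }
  assert (E2 : 0 <= 2 * t / (1 + t^2) <= 2 * t).
  { split; [apply Rle_mult_inv_pos; nra|apply Rdiv_le_of_le_mul; nra]. }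
  rewrite Rabs_Ropp, !Rabs_right by nra. split; nra.
Qed.

Definition param (tau : R) (j : nat) : R := tau / (INR j + 1).

Lemma param_range (tau : R) (j : nat) : 0 < tau -> 0 < param tau j <= tau.
Proof.
  intros Ht. unfold param. pose proof (pos_INR j). split.
  - apply Rdiv_lt_0_compat; lra.
  - apply Rdiv_le_of_le_mul; nra.
Qed.

Lemma param_inj (tau : R) (j j' : nat) : 0 < tau -> param tau j = param tau j' -> j = j'.
Proof.
  intros Ht E. unfold param in E. pose proof (pos_INR j); pose proof (pos_INR j').
  apply INR_eq. apply (f_equal Rinv) in E. rewrite !Rinv_div in E.
  apply (Rmult_eq_reg_r (/ tau)) in E; [lra|]. apply Rinv_neq_0_compat; lra.
Qed.

(* The point [p + al (y - p) + be (y - p)^perp] at distances [b] from [p] and [c] from [y],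
   with [al] and [be] given by the law of cosines. *)
Definition triangle_apex (b c : R) (p y : pt) : pt :=
  let dx := fst y - fst p in
  let dy := snd y - snd p in
  let D := dx^2 + dy^2 in
  let al := (D + b^2 - c^2) / (2 * D) in
  let be := sqrt (4 * b^2 * D - (D + b^2 - c^2)^2) / (2 * D) in
  (fst p + (al * dx - be * dy), snd p + (al * dy + be * dx)).

Lemma triangle_apex_dist (b c : R) (p y : pt) :
  0 <= b -> 0 <= c ->
  let D := (fst y - fst p)^2 + (snd y - snd p)^2 in
  0 < D -> 0 <= 4 * b^2 * D - (D + b^2 - c^2)^2 ->
  dist p (triangle_apex b c p y) = b /\ dist (triangle_apex b c p y) y = c.
Proof.
  intros Hb Hc D HD Hdisc. unfold triangle_apex. fold D.
  set (dx := fst y - fst p) in *. set (dy := snd y - snd p) in *.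
  set (A := D + b^2 - c^2).
  set (r := sqrt (4 * b^2 * D - A^2)).
  assert (Hr : r^2 = 4 * b^2 * D - A^2)
    by (unfold r; rewrite <- Rsqr_pow2; now apply Rsqr_sqrt).
  assert (HD' : D = dx^2 + dy^2) by reflexivity.
  split; apply dist_eq_sqr; try assumption; cbn [fst snd].
  - replace ((fst p - (fst p + (A / (2 * D) * dx - r / (2 * D) * dy)))^2
             + (snd p - (snd p + (A / (2 * D) * dy + r / (2 * D) * dx)))^2)
      with ((A^2 + r^2) * (dx^2 + dy^2) / (4 * D^2)) by (field; lra).
    rewrite Hr, <- HD'. field. lra.
  - replace ((fst p + (A / (2 * D) * dx - r / (2 * D) * dy) - fst y)^2
             + (snd p + (A / (2 * D) * dy + r / (2 * D) * dx) - snd y)^2)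
      with (((2 * D - A)^2 + r^2) * (dx^2 + dy^2) / (4 * D^2))
      by (unfold dx, dy; field; lra).
    rewrite Hr, <- HD'. unfold A. field. lra.
Qed.

Lemma triangle_apex_fst (b c : R) (p y : pt) :
  let D := (fst y - fst p)^2 + (snd y - snd p)^2 in
  let r := sqrt (4 * b^2 * D - (D + b^2 - c^2)^2) in
  0 < D ->
  fst (triangle_apex b c p y) - fst p
    = ((D + b^2 - c^2) * (fst y - fst p) - r * (snd y - snd p)) / (2 * D) /\
  fst y - fst (triangle_apex b c p y)
    = ((D + c^2 - b^2) * (fst y - fst p) + r * (snd y - snd p)) / (2 * D).
Proof. intros D r HD. unfold triangle_apex. fold D r. cbn [fst]. split; field; lra. Qed.

(* A crude radius within which a base [y - p] close to [(sqrt (b^2 + c^2), 0)] keeps the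
   triangle near the right triangle with legs [b] and [c]; in particular the apex exists and lies
   strictly between [p] and [y] in abscissa. *)
Definition rho (b c : R) : R := Rmin (b^2) (c^2) / (12 * sqrt (b^2 + c^2)).

Lemma near_base_estimates (b c dx dy : R) :
  0 < b -> 0 < c -> in_box (sqrt (b^2 + c^2), 0) (rho b c) (dx, dy) ->
  let D := dx^2 + dy^2 in
  0 < D /\ 0 <= 4 * b^2 * D - (D + b^2 - c^2)^2 <= 4 * b^2 * c^2 /\
  forall r', 0 <= r' <= 2 * b * c ->
    0 < (D + b^2 - c^2) * dx - r' * dy /\ 0 < (D + c^2 - b^2) * dx + r' * dy.
Proof.
  intros Hb Hc [Hx Hy] D. cbn [fst snd] in Hx, Hy. rewrite Rminus_0_r in Hy.
  set (s := sqrt (b^2 + c^2)) in *. set (r := rho b c) in *.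
  assert (Hs_pos : 0 < s) by (apply sqrt_lt_R0; nra).
  assert (Hs2 : s^2 = b^2 + c^2) by (unfold s; rewrite <- Rsqr_pow2; apply Rsqr_sqrt; nra).
  assert (Hmin : 12 * s * r = Rmin (b^2) (c^2)) by (unfold r, rho; fold s; field; lra).
  pose proof (Rmin_l (b^2) (c^2)); pose proof (Rmin_r (b^2) (c^2)).
  assert (Hr : 12 * r <= s) by (apply (Rmult_le_reg_l s); [lra|]; pose proof (pow2_ge_0 c); nra).
  apply Rabs_le_inv in Hx, Hy.
  set (w := D - s^2).
  assert (Hw : - (3 * s * r) <= w <= 3 * s * r) by (unfold w, D; split; nra).
  assert (Hbc : 2 * b * c <= s^2) by (pose proof (pow2_ge_0 (b - c)); nra).
  assert (Hsr : 3 * s * r <= Rmin (b^2) (c^2) / 4) by lra.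
  assert (Hw2 : w^2 <= b^2 * c^2 / 16).
  { assert (Hwa : Rabs w <= Rmin (b^2) (c^2) / 4) by (apply Rabs_le; lra).
    rewrite <- pow2_abs. pose proof (Rabs_pos w). nra. }
  assert (HDw : D = s^2 + w) by (unfold w; ring).
  assert (Hdisc : 4 * b^2 * D - (D + b^2 - c^2)^2 = 4 * b^2 * c^2 - w^2)
    by (rewrite HDw, Hs2; ring).
  rewrite Hdisc. split; [|split; [split|]].
  - nra.
  - nra.
  - pose proof (pow2_ge_0 w). lra.
  - intros r' Hr'.
    assert (Hcross : 2 * b * c * r <= Rmin (b^2) (c^2) * s / 12)
      by (apply (Rmult_le_reg_l (12 * s)); nra).
    assert (Hrdy : Rabs (r' * dy) <= 2 * b * c * r)
      by (rewrite Rabs_mult; apply Rmult_le_compat; try apply Rabs_pos;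
          [rewrite Rabs_right; lra|apply Rabs_le; lra]).
    apply Rabs_le_inv in Hrdy.
    assert (Hb2 : 7 * b^2 / 4 * (11 * s / 12) <= (D + b^2 - c^2) * dx)
      by (apply Rmult_le_compat; lra).
    assert (Hc2 : 7 * c^2 / 4 * (11 * s / 12) <= (D + c^2 - b^2) * dx)
      by (apply Rmult_le_compat; lra).
    assert (Rmin (b^2) (c^2) * s <= b^2 * s) by (apply Rmult_le_compat_r; lra).
    assert (Rmin (b^2) (c^2) * s <= c^2 * s) by (apply Rmult_le_compat_r; lra).
    assert (0 < b^2 * s /\ 0 < c^2 * s) by (split; apply Rmult_lt_0_compat; nra).
    split; lra.
Qed.

Lemma rho_pos (b c : R) : 0 < b -> 0 < c -> 0 < rho b c.
Proof.
  intros Hb Hc. apply Rdiv_lt_0_compat; [apply Rmin_glb_lt; nra|].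
  assert (0 < sqrt (b^2 + c^2)) by (apply sqrt_lt_R0; nra). lra.
Qed.

Lemma triangle_apex_near (b c : R) (Z p : pt) :
  0 < b -> 0 < c -> in_box Z (rho b c) p ->
  let y := (fst Z + sqrt (b^2 + c^2), snd Z) in
  dist p (triangle_apex b c p y) = b /\ dist (triangle_apex b c p y) y = c /\
  lex_lt p (triangle_apex b c p y) /\ lex_lt (triangle_apex b c p y) y.
Proof.
  intros Hb Hc [Hu Hv] y.
  assert (Hbase : in_box (sqrt (b^2 + c^2), 0) (rho b c) (fst y - fst p, snd y - snd p)).
  { unfold in_box, y; cbn [fst snd].
    replace (fst Z + sqrt (b^2 + c^2) - fst p - sqrt (b^2 + c^2)) with (- (fst p - fst Z))
      by ring.
    replace (snd Z - snd p - 0) with (- (snd p - snd Z)) by ring.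
    now rewrite !Rabs_Ropp. }
  destruct (near_base_estimates b c _ _ Hb Hc Hbase) as [HD [Hdisc Hoff]].
  destruct (triangle_apex_dist b c p y ltac:(lra) ltac:(lra) HD (proj1 Hdisc)) as [Hpq Hqy].
  destruct (triangle_apex_fst b c p y HD) as [Hleft Hright].
  set (D := (fst y - fst p)^2 + (snd y - snd p)^2) in *.
  destruct (Hoff (sqrt (4 * b^2 * D - (D + b^2 - c^2)^2))) as [Hpos1 Hpos2].
  { split; [apply sqrt_pos|]. rewrite <- (sqrt_pow2 (2 * b * c)) by nra.
    apply sqrt_le_1_alt. nra. }
  split; [exact Hpq|split; [exact Hqy|split; left]].
  - apply Rlt_0_minus. rewrite Hleft. apply Rdiv_lt_0_compat; lra.
  - apply Rlt_0_minus. rewrite Hright. apply Rdiv_lt_0_compat; lra.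
Qed.

(** * Trails between hubs *)

Definition hub (d : nat -> R) (Z : pt) : pt := (fst Z + sqrt (d 0%nat ^ 2 + d 1%nat ^ 2), snd Z).

Definition arm_angle (d : nat -> R) : R :=
  rho (d 1%nat) (d 2%nat) / (2 * d 0%nat + rho (d 1%nat) (d 2%nat)).

Definition arm (d : nat -> R) (X : pt) (j : nat) : pt :=
  spoke (d 0%nat) (param (arm_angle d) j) X.

Lemma arm_angle_spec (d : nat -> R) : (forall i, 0 < d i) ->
  0 < arm_angle d < 1 /\ 2 * d 0%nat * arm_angle d <= rho (d 1%nat) (d 2%nat).
Proof.
  intros Hd. pose proof (Hd 0%nat) as H0.
  pose proof (rho_pos (d 1%nat) (d 2%nat) (Hd 1%nat) (Hd 2%nat)) as Hr.
  set (r := rho (d 1%nat) (d 2%nat)) in *. unfold arm_angle. fold r.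
  repeat split.
  - apply Rdiv_lt_0_compat; lra.
  - replace (r / (2 * d 0%nat + r)) with (1 - 2 * d 0%nat / (2 * d 0%nat + r)) by (field; lra).
    assert (0 < 2 * d 0%nat / (2 * d 0%nat + r)) by (apply Rdiv_lt_0_compat; lra). lra.
  - replace (2 * d 0%nat * (r / (2 * d 0%nat + r))) with (2 * d 0%nat * r / (2 * d 0%nat + r))
      by (field; lra).
    apply Rdiv_le_of_le_mul; nra.
Qed.

Lemma arm_spec (d : nat -> R) (X : pt) (j : nat) : (forall i, 0 < d i) ->
  dist X (arm d X j) = d 0%nat /\ lex_lt X (arm d X j) /\
  in_box (fst X + d 0%nat, snd X) (rho (d 1%nat) (d 2%nat)) (arm d X j).
Proof.
  intros Hd. pose proof (Hd 0%nat) as H0.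
  destruct (arm_angle_spec d Hd) as [Ha Hbox].
  destruct (param_range (arm_angle d) j (proj1 Ha)) as [Ht1 Ht2].
  unfold arm. split; [|split].
  - rewrite dist_spoke. now apply Rabs_right, Rle_ge, Rlt_le.
  - apply lex_lt_spoke; lra.
  - destruct (spoke_in_box (d 0%nat) (param (arm_angle d) j) X H0 ltac:(lra)) as [Hx Hy].
    split; [apply (Rle_trans _ _ _ Hx)|apply (Rle_trans _ _ _ Hy)]; nra.
Qed.

Lemma arm_inj (d : nat -> R) (X : pt) (j j' : nat) : (forall i, 0 < d i) ->
  arm d X j = arm d X j' -> j = j'.
Proof.
  intros Hd E. destruct (arm_angle_spec d Hd) as [Ha _].
  pose proof (param_range (arm_angle d) j (proj1 Ha)).
  pose proof (param_range (arm_angle d) j' (proj1 Ha)).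
  apply (param_inj (arm_angle d)); [lra|].
  apply (spoke_inj (d 0%nat) _ _ X); [apply Rgt_not_eq, Hd|lra|lra|exact E].
Qed.

(* From [p] near [Z]: [p], its apex towards [hub d Z], the hub, and then, for the free choice [j],
   the [j]-th arm of the hub, which lies near the next reference point. *)
Fixpoint trail (d : nat -> R) (Z p : pt) (js : list nat) : list pt :=
  match js with
  | [] => [p]
  | j :: js' =>
      p :: triangle_apex (d 0%nat) (d 1%nat) p (hub d Z) :: hub d Z ::
        trail (dshift 3 d) (fst (hub d Z) + d 2%nat, snd (hub d Z))
          (arm (dshift 2 d) (hub d Z) j) js'
  end.

Lemma trail_hd (d : nat -> R) (Z p : pt) (js : list nat) :
  exists rest, trail d Z p js = p :: rest.
Proof. destruct js; cbn; eauto. Qed.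

Lemma trail_length (d : nat -> R) (Z p : pt) (js : list nat) :
  length (trail d Z p js) = S (3 * length js).
Proof.
  revert d Z p; induction js as [|j js IH]; intros; cbn [trail length]; [reflexivity|].
  rewrite IH. lia.
Qed.

Lemma trail_walk (d : nat -> R) (Z p : pt) (js : list nat) :
  (forall i, 0 < d i) -> in_box Z (rho (d 0%nat) (d 1%nat)) p -> walk d (trail d Z p js).
Proof.
  revert d Z p; induction js as [|j js IH]; intros d Z p Hd Hp; [exact I|].
  destruct (triangle_apex_near (d 0%nat) (d 1%nat) Z p (Hd 0%nat) (Hd 1%nat) Hp)
    as [Hpq [Hqy [Hpq' Hqy']]].
  destruct (arm_spec (dshift 2 d) (hub d Z) j (fun i => Hd _)) as [Hya [Hya' Hbox]].
  change (dshift 2 d 0) with (d 2%nat) in Hya, Hbox.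
  pose proof (IH (dshift 3 d) _ _ (fun i => Hd _) Hbox) as Hw.
  destruct (trail_hd (dshift 3 d) (fst (hub d Z) + d 2%nat, snd (hub d Z))
              (arm (dshift 2 d) (hub d Z) j) js) as [rest Hrest].
  cbn [trail]. rewrite Hrest in *. cbn [walk].
  repeat split; assumption || exact Hw.
Qed.

Lemma trail_inj (d : nat -> R) (Z p p' : pt) (js js' : list nat) : (forall i, 0 < d i) ->
  trail d Z p js = trail d Z p' js' -> p = p' /\ js = js'.
Proof.
  revert d Z p p' js'; induction js as [|j js IH]; intros d Z p p' js' Hd E;
    destruct js' as [|j' js']; cbn [trail] in E; try (inversion E; fail).
  - now injection E as ->.
  - pose proof (f_equal (@hd pt (0,0)) E) as Ep. pose proof (f_equal (skipn 3) E) as Etail.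
    cbn [hd skipn] in Ep, Etail.
    destruct (trail_hd (dshift 3 d) (fst (hub d Z) + d 2%nat, snd (hub d Z))
                (arm (dshift 2 d) (hub d Z) j) js) as [rest Hrest].
    destruct (trail_hd (dshift 3 d) (fst (hub d Z) + d 2%nat, snd (hub d Z))
                (arm (dshift 2 d) (hub d Z) j') js') as [rest' Hrest'].
    assert (Ej : j = j').
    { apply (arm_inj (dshift 2 d) (hub d Z)); [intros; apply Hd|].
      rewrite Hrest, Hrest' in Etail. exact (f_equal (@hd pt (0,0)) Etail). }
    subst j'. destruct (IH _ _ _ _ _ (fun i => Hd _) Etail) as [_ ->]. now split.
Qed.

Fixpoint trail_sets (d : nat -> R) (Z : pt) (Ps : list pt) (n m : nat) : list (list pt) :=
  match m with
  | O => [Ps]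
  | S m' =>
      Ps :: map (fun p => triangle_apex (d 0%nat) (d 1%nat) p (hub d Z)) Ps :: [hub d Z] ::
        trail_sets (dshift 3 d) (fst (hub d Z) + d 2%nat, snd (hub d Z))
          (map (arm (dshift 2 d) (hub d Z)) (seq 0 n)) n m'
  end.

Lemma trail_in_sets (d : nat -> R) (Z p : pt) (Ps : list pt) (n : nat) (js : list nat) :
  In p Ps -> Forall (fun j => (j < n)%nat) js ->
  Forall2 (@In pt) (trail d Z p js) (trail_sets d Z Ps n (length js)).
Proof.
  revert d Z p Ps; induction js as [|j js IH]; intros d Z p Ps Hp Hjs.
  - now repeat constructor.
  - inversion Hjs as [|? ? Hj Hjs']; subst. cbn [trail trail_sets length].
    constructor; [exact Hp|].
    constructor; [exact (in_map (fun q => triangle_apex (d 0%nat) (d 1%nat) q (hub d Z)) _ _ Hp)|].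
    constructor; [now left|].
    apply IH; [|exact Hjs']. apply in_map, in_seq. lia.
Qed.

Lemma trail_sets_small (d : nat -> R) (Z : pt) (Ps : list pt) (n m : nat) :
  (1 <= n)%nat -> (length Ps <= n)%nat ->
  Forall (fun C => (length C <= n)%nat) (trail_sets d Z Ps n m).
Proof.
  revert d Z Ps; induction m as [|m IH]; intros d Z Ps Hn HPs; cbn [trail_sets].
  - now repeat constructor.
  - constructor; [exact HPs|]. constructor; [now rewrite length_map|].
    constructor; [cbn; lia|]. apply IH; [exact Hn|]. now rewrite length_map, length_seq.
Qed.

Fixpoint index_lists (m n : nat) : list (list nat) :=
  match m with
  | O => [[]]
  | S m' => flat_map (fun j => map (cons j) (index_lists m' n)) (seq 0 n)
  end.

Lemma length_index_lists (m n : nat) : length (index_lists m n) = (n ^ m)%nat.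
Proof.
  induction m as [|m IH]; [reflexivity|]. cbn [index_lists].
  rewrite (flat_map_constant_length (c := (n ^ m)%nat)), length_seq
    by (intros; now rewrite length_map).
  now rewrite Nat.pow_succ_r'.
Qed.

Lemma NoDup_index_lists (m n : nat) : NoDup (index_lists m n).
Proof.
  induction m as [|m IH]; cbn [index_lists]; [now repeat constructor|].
  apply NoDup_flat_map; [apply seq_NoDup| |].
  - intros j. apply Injective_map_NoDup; [intros js js' E; now injection E|exact IH].
  - intros j j' js Hj Hj'. apply in_map_iff in Hj as [x [<- _]].
    apply in_map_iff in Hj' as [x' [E _]]. now injection E.
Qed.

Lemma in_index_lists (m n : nat) (js : list nat) :
  In js (index_lists m n) -> length js = m /\ Forall (fun j => (j < n)%nat) js.
Proof.
  revert js; induction m as [|m IH]; intros js Hjs; cbn [index_lists] in Hjs.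
  - destruct Hjs as [<-|[]]. now split.
  - apply in_flat_map in Hjs as [j [Hj Hjs]]. apply in_map_iff in Hjs as [js' [<- Hjs']].
    apply in_seq in Hj. destruct (IH js' Hjs') as [Hlen Hlt].
    split; [cbn; now f_equal|constructor; [lia|exact Hlt]].
Qed.

Definition pair_trails (d : nat -> R) (z : pt) (n m : nat) (D : list (pt * pt)) :
    list (list pt) :=
  flat_map (fun e => map (fun js => fst e :: trail (dshift 1 d) z (snd e) js) (index_lists m n)) D.

Lemma length_pair_trails (d : nat -> R) (z : pt) (n m : nat) (D : list (pt * pt)) :
  length (pair_trails d z n m D) = (length D * n ^ m)%nat.
Proof.
  unfold pair_trails. rewrite (flat_map_constant_length (c := (n ^ m)%nat)); [reflexivity|].
  intros e _. now rewrite length_map, length_index_lists.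
Qed.

Lemma realizes_pair_trails (d : nat -> R) (z : pt) (n m : nat) (D : list (pt * pt))
    (tails heads : list pt) :
  (forall i, 0 < d i) -> NoDup D ->
  (forall e, In e D -> dist (fst e) (snd e) = d 0%nat /\ lex_lt (fst e) (snd e) /\
     in_box z (rho (d 1%nat) (d 2%nat)) (snd e) /\ In (fst e) tails /\ In (snd e) heads) ->
  realizes (3 * m + 1) d (tails :: trail_sets (dshift 1 d) z heads n m) (pair_trails d z n m D).
Proof.
  intros Hd HD HDe. split.
  - apply NoDup_flat_map; [exact HD| |].
    + intros e. apply Injective_map_NoDup; [|apply NoDup_index_lists].
      intros js js' E. injection E as E.
      exact (proj2 (trail_inj _ _ _ _ _ _ (fun i => Hd _) E)).
    + intros [t h] [t' h'] x Hx Hx'.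
      apply in_map_iff in Hx as [js [<- _]]. apply in_map_iff in Hx' as [js' [E _]].
      injection E as -> E. apply trail_inj in E as [-> _]; [reflexivity|intros; apply Hd].
  - intros x Hx. apply in_flat_map in Hx as [[t h] [He Hx]].
    apply in_map_iff in Hx as [js [<- Hjs]]. apply in_index_lists in Hjs as [Hlen Hlt].
    destruct (HDe _ He) as [Htd [Htl [Hbox [Ht Hh]]]]. cbn [fst snd] in *.
    destruct (trail_hd (dshift 1 d) z h js) as [rest Hrest].
    pose proof (trail_walk (dshift 1 d) z h js (fun i => Hd _) Hbox) as Hw.
    split; [|split].
    + cbn [length]. rewrite trail_length. lia.
    + rewrite Hrest in *. cbn [walk]. now repeat split.
    + constructor; [exact Ht|]. rewrite <- Hlen. now apply trail_in_sets.
Qed.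

Lemma Ck_max_ge_pairs (d : nat -> R) (z : pt) (n m : nat) (D : list (pt * pt))
    (tails heads : list pt) :
  (forall i, 0 < d i) -> (1 <= n)%nat -> (length tails <= n)%nat -> (length heads <= n)%nat ->
  NoDup D ->
  (forall e, In e D -> dist (fst e) (snd e) = d 0%nat /\ lex_lt (fst e) (snd e) /\
     in_box z (rho (d 1%nat) (d 2%nat)) (snd e) /\ In (fst e) tails /\ In (snd e) heads) ->
  (length D * n ^ m <= Ck_max (3 * m + 1) d n)%nat.
Proof.
  intros Hd Hn Htails Hheads HD HDe. rewrite <- (length_pair_trails d z n m D).
  apply (Ck_max_ge_realizes _ _ _ _ _ (realizes_pair_trails d z n m D tails heads Hd HD HDe)).
  constructor; [exact Htails|]. now apply trail_sets_small.
Qed.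

Definition fan (a : R) (n : nat) (p : pt) : list pt :=
  map (fun j => spoke (- a) (param (1/2) j) p) (seq 0 n).

Lemma fan_spec (a : R) (n : nat) : 0 < a -> forall p,
  NoDup (fan a n p) /\ length (fan a n p) = n /\
  forall q, In q (fan a n p) -> dist q p = a /\ lex_lt q p.
Proof.
  intros Ha p. unfold fan. split; [|split].
  - apply Injective_map_NoDup; [|apply seq_NoDup]. intros j j' E.
    pose proof (param_range (1/2) j ltac:(lra)); pose proof (param_range (1/2) j' ltac:(lra)).
    apply (param_inj (1/2)); [lra|]. apply (spoke_inj (- a) _ _ p); [lra|lra|lra|exact E].
  - now rewrite length_map, length_seq.
  - intros q Hq. apply in_map_iff in Hq as [j [<- _]].
    pose proof (param_range (1/2) j ltac:(lra)). split.
    + rewrite dist_sym, dist_spoke, Rabs_Ropp. now apply Rabs_right, Rle_ge, Rlt_le.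
    + apply lex_lt_spoke_opp; lra.
Qed.

Definition step_left (a : R) (p : pt) : list pt := [(fst p - a, snd p)].

Lemma step_left_spec (a : R) : 0 < a -> forall p,
  NoDup (step_left a p) /\ length (step_left a p) = 1%nat /\
  forall q, In q (step_left a p) -> dist q p = a /\ lex_lt q p.
Proof.
  intros Ha p. split; [now repeat constructor|split; [reflexivity|]].
  intros q [<-|[]]. split.
  - apply dist_eq_sqr; [lra|]. cbn [fst snd]. ring.
  - left. cbn [fst]. lra.
Qed.

Lemma realizes_fan_trails (d : nat -> R) (m n : nat) :
  (forall i, 0 < d i) -> (1 <= n)%nat ->
  exists Cs W, realizes (3 * m + 2) d Cs W /\ Forall (fun C => (length C <= n)%nat) Cs /\
    length W = (n ^ (m + 2))%nat.
Proof.
  intros Hd Hn. set (d' := dshift 1 d). set (X0 := ((0, 0) : pt)).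
  set (heads := map (arm d' X0) (seq 0 n)).
  set (D := map (fun j => (X0, arm d' X0 j)) (seq 0 n)).
  assert (HD : NoDup D).
  { apply Injective_map_NoDup; [|apply seq_NoDup]. intros j j' E.
    exact (arm_inj d' X0 j j' (fun i => Hd _) (f_equal snd E)). }
  assert (HDe : forall e, In e D -> dist (fst e) (snd e) = d' 0%nat /\ lex_lt (fst e) (snd e) /\
            in_box (fst X0 + d' 0%nat, snd X0) (rho (d' 1%nat) (d' 2%nat)) (snd e) /\
            In (fst e) [X0] /\ In (snd e) heads).
  { intros e He. apply in_map_iff in He as [j [<- Hj]]. cbn [fst snd].
    destruct (arm_spec d' X0 j (fun i => Hd _)) as [H1 [H2 H3]].
    split; [exact H1|split; [exact H2|split; [exact H3|split; [now left|now apply in_map]]]]. }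
  pose proof (realizes_pair_trails d' _ n m D [X0] heads (fun i => Hd _) HD HDe) as Hreal.
  destruct (realizes_prepend _ d _ _ (fan (d 0%nat) n) n Hreal (fan_spec (d 0%nat) n (Hd _)))
    as [Hreal' Hlen].
  eexists _, _. split; [replace (3 * m + 2)%nat with (S (3 * m + 1)) by lia; exact Hreal'|].
  split.
  - constructor.
    { cbn [hd flat_map]. rewrite app_nil_r. apply Nat.eq_le_incl, (fan_spec (d 0%nat) n (Hd _)). }
    constructor; [cbn; lia|]. apply trail_sets_small; [exact Hn|].
    unfold heads. now rewrite length_map, length_seq.
  - rewrite Hlen, length_pair_trails. unfold D. rewrite length_map, length_seq, Nat.pow_add_r.
    cbn. ring.
Qed.

Lemma Ck_max_ge_pow (d : nat -> R) (k n : nat) :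
  (forall i, 0 < d i) -> (1 <= k)%nat -> (k mod 3 = 0 \/ k mod 3 = 2)%nat -> (1 <= n)%nat ->
  (n ^ ((k + 1) / 3 + 1) <= Ck_max k d n)%nat.
Proof.
  intros Hd Hk Hmod Hn. pose proof (Nat.div_mod_eq k 3) as Hk3.
  destruct Hmod as [H0|H2].
  - set (m := (k / 3 - 1)%nat).
    replace ((k + 1) / 3 + 1)%nat with (m + 2)%nat
      by (rewrite <- (Nat.div_unique (k + 1) 3 (k / 3) 1); lia).
    replace k with (S (3 * m + 2)) by lia.
    destruct (realizes_fan_trails (dshift 1 d) m n (fun i => Hd _) Hn)
      as [Cs [W [Hreal [Hsmall Hlen]]]].
    destruct (realizes_prepend _ d _ _ (step_left (d 0%nat)) 1 Hreal (step_left_spec _ (Hd _)))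
      as [Hreal' Hlen'].
    rewrite <- Hlen, <- (Nat.mul_1_r (length W)), <- Hlen'.
    apply (Ck_max_ge_realizes _ _ _ _ _ Hreal'). constructor; [|exact Hsmall].
    destruct Cs as [|C Cs]; cbn; [lia|].
    rewrite (flat_map_constant_length (c := 1%nat)) by reflexivity.
    inversion Hsmall. lia.
  - set (m := (k / 3)%nat).
    replace ((k + 1) / 3 + 1)%nat with (m + 2)%nat
      by (rewrite <- (Nat.div_unique (k + 1) 3 (m + 1) 0); lia).
    replace k with (3 * m + 2)%nat by lia.
    destruct (realizes_fan_trails d m n Hd Hn) as [Cs [W [Hreal [Hsmall Hlen]]]].
    rewrite <- Hlen. exact (Ck_max_ge_realizes _ _ _ _ _ Hreal Hsmall).
Qed.

(** * Localizing unit-distance pairs *)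

Lemma length_filter_filter_le {A} (p q : A -> bool) (l : list A) :
  (length (filter p (filter q l)) <= length (filter p l))%nat.
Proof.
  induction l as [|x l IH]; cbn; [lia|].
  destruct (q x), (p x) eqn:E; cbn; rewrite ?E; cbn; lia.
Qed.

Lemma pigeonhole_filter {A B} (eqB : forall x y : B, {x = y} + {x <> y})
    (f : A -> B) (cs : list B) (l : list A) :
  cs <> [] -> (forall x, In x l -> In (f x) cs) ->
  exists c, (length l <= length cs *
               length (filter (fun x => if eqB (f x) c then true else false) l))%nat.
Proof.
  revert l; induction cs as [|c cs IH]; intros l Hne Hl; [easy|].
  set (hit c' x := if eqB (f x) c' then true else false).
  change (exists c', (length l <= length (c :: cs) * length (filter (hit c') l))%nat).
  remember (filter (fun x => negb (hit c x)) l) as l2 eqn:El2.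
  pose proof (filter_length (hit c) l) as Hsplit. rewrite <- El2 in Hsplit.
  destruct l2 as [|x l2'].
  - exists c. cbn [length] in *. nia.
  - assert (Hl2 : forall y, In y (x :: l2') -> In (f y) cs).
    { intros y Hy. rewrite El2 in Hy. apply filter_In in Hy as [Hy Hc].
      destruct (Hl y Hy) as [E|]; [|assumption].
      unfold hit in Hc. destruct (eqB (f y) c); [discriminate|congruence]. }
    assert (Hcs : cs <> []) by (intros ->; exact (Hl2 x (or_introl eq_refl))).
    destruct (IH _ Hcs Hl2) as [c1 Hc1].
    assert (Hsub : (length (filter (hit c1) (x :: l2')) <= length (filter (hit c1) l))%nat)
      by (rewrite El2; apply length_filter_filter_le).
    change (length (x :: l2') <= length cs * length (filter (hit c1) (x :: l2')))%nat in Hc1.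
    destruct (Nat.le_ge_cases (length (filter (hit c) l)) (length (filter (hit c1) l))).
    + exists c1. cbn [length] in *. nia.
    + exists c. cbn [length] in *. nia.
Qed.

Lemma exists_small_not_in (l : list R) (L : nat) (b : R) :
  0 < b -> exists e, 0 <= e /\ e * INR L <= b /\ ~ In e l.
Proof.
  intros Hb. apply NNPP. intros Hno.
  set (e0 := b / (INR L + 1)).
  assert (He0 : 0 < e0) by (apply Rdiv_lt_0_compat; [lra|pose proof (pos_INR L); lra]).
  assert (Hsmall : forall j, param e0 j * INR L <= b).
  { intros j. destruct (param_range e0 j He0). pose proof (pos_INR L).
    apply (Rle_trans _ (e0 * (INR L + 1))); [nra|].
    unfold e0. apply Req_le. field. lra. }
  set (cands := map (param e0) (seq 0 (S (length l)))).
  assert (Hincl : incl cands l).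
  { intros x Hx. apply in_map_iff in Hx as [j [<- _]]. apply NNPP. intros Hj.
    apply Hno. exists (param e0 j).
    split; [apply Rlt_le, param_range, He0|split; [apply Hsmall|exact Hj]]. }
  assert (Hnd : NoDup cands).
  { apply Injective_map_NoDup; [intros j j'; apply param_inj, He0|apply seq_NoDup]. }
  pose proof (NoDup_incl_length Hnd Hincl) as Hlen.
  unfold cands in Hlen. rewrite length_map, length_seq in Hlen. lia.
Qed.

Fixpoint index_of {A} (eqA : forall x y : A, {x = y} + {x <> y}) (x : A) (l : list A) : nat :=
  match l with
  | [] => O
  | y :: l' => if eqA y x then O else S (index_of eqA x l')
  end.

Lemma index_of_spec {A} (eqA : forall x y : A, {x = y} + {x <> y}) (x d : A) (l : list A) :
  In x l -> (index_of eqA x l < length l)%nat /\ nth (index_of eqA x l) l d = x.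
Proof.
  induction l as [|y l IH]; intros Hx; [destruct Hx|]. cbn [index_of length nth].
  destruct (eqA y x) as [->|Hne]; [split; [lia|reflexivity]|].
  destruct Hx as [->|Hx]; [contradiction|]. destruct (IH Hx). split; [lia|assumption].
Qed.

Definition cell (r : R) (p : pt) : Z * Z :=
  (Int_part (fst p / (r / 2)), Int_part (snd p / (r / 2))).

Definition cell_eq_dec (C C' : Z * Z) : {C = C'} + {C <> C'}.
Proof. decide equality; apply Z.eq_dec. Defined.

Lemma Int_part_div_bounds (x s : R) : 0 < s ->
  s * IZR (Int_part (x / s)) <= x < s * IZR (Int_part (x / s)) + s.
Proof.
  intros Hs_pos. destruct (base_Int_part (x / s)) as [H1 H2].
  assert (E : s * (x / s) = x) by (field; lra).
  split; [rewrite <- E at 2|rewrite <- E at 1]; nra.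
Qed.

Definition period (a r : R) : nat := S (Z.to_nat (up (4 * a / r))).

Lemma Int_part_div_close (a r x y : R) : 0 < a -> 0 < r -> Rabs (x - y) <= 2 * a ->
  (- Z.of_nat (period a r) < Int_part (x / (r / 2)) - Int_part (y / (r / 2))
     < Z.of_nat (period a r))%Z.
Proof.
  intros Ha Hr Hxy. apply Rabs_le_inv in Hxy.
  destruct (Int_part_div_bounds x (r / 2) ltac:(lra)) as [Hx1 Hx2].
  destruct (Int_part_div_bounds y (r / 2) ltac:(lra)) as [Hy1 Hy2].
  set (P := up (4 * a / r)).
  assert (HP : 4 * a / r < IZR P) by apply archimed.
  assert (HP0 : (0 <= P)%Z) by (apply le_IZR; assert (0 < 4 * a / r) by
    (apply Rdiv_lt_0_compat; lra); lra).
  assert (HPr : 4 * a < IZR P * r) by (apply (Rmult_lt_compat_r r) in HP;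
    [unfold Rdiv in HP; rewrite Rmult_assoc, Rinv_l, Rmult_1_r in HP by lra; lra|lra]).
  unfold period. rewrite Nat2Z.inj_succ, Z2Nat.id by exact HP0. fold P.
  set (X := Int_part (x / (r / 2))) in *. set (Y := Int_part (y / (r / 2))) in *.
  assert (Hd : - (IZR P + 1) < IZR X - IZR Y < IZR P + 1) by (split; nra).
  rewrite <- minus_IZR in Hd. destruct Hd as [Hd1 Hd2].
  rewrite <- (plus_IZR P 1), <- opp_IZR in Hd1. rewrite <- plus_IZR in Hd2.
  apply lt_IZR in Hd1, Hd2. lia.
Qed.

Definition cell_class (a r : R) (p : pt) : Z * Z :=
  (fst (cell r p) mod Z.of_nat (period a r), snd (cell r p) mod Z.of_nat (period a r))%Z.

Lemma Z_eq_of_mod_eq (x y P : Z) :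
  (0 < P)%Z -> (x mod P = y mod P)%Z -> (- P < x - y < P)%Z -> x = y.
Proof.
  intros HP E H. pose proof (Z_div_mod_eq_full x P). pose proof (Z_div_mod_eq_full y P).
  assert (x - y = P * (x / P - y / P))%Z by lia.
  assert (x / P - y / P = 0)%Z by nia. lia.
Qed.

Lemma cell_eq_of_common_tail (a r : R) (t h h' : pt) : 0 < a -> 0 < r ->
  dist t h = a -> dist t h' = a -> cell_class a r h = cell_class a r h' -> cell r h = cell r h'.
Proof.
  intros Ha Hr Hh Hh' E.
  destruct (dist_coord_le t h a Hh) as [Hx Hy]. destruct (dist_coord_le t h' a Hh') as [Hx' Hy'].
  apply Rabs_le_inv in Hx, Hy, Hx', Hy'.
  pose proof (Int_part_div_close a r (fst h) (fst h') Ha Hr ltac:(apply Rabs_le; lra)).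
  pose proof (Int_part_div_close a r (snd h) (snd h') Ha Hr ltac:(apply Rabs_le; lra)).
  unfold cell_class in E. injection E as Ex Ey. unfold cell in *; cbn [fst snd] in *.
  f_equal; eapply Z_eq_of_mod_eq; eauto; unfold period; lia.
Qed.

Definition cell_classes (a r : R) : list (Z * Z) :=
  list_prod (map Z.of_nat (seq 0 (period a r))) (map Z.of_nat (seq 0 (period a r))).

Lemma length_cell_classes (a r : R) : length (cell_classes a r) = (period a r ^ 2)%nat.
Proof. unfold cell_classes. now rewrite length_prod, !length_map, length_seq, Nat.pow_2_r. Qed.

Lemma cell_class_in (a r : R) (p : pt) : In (cell_class a r p) (cell_classes a r).
Proof.
  assert (HP : (0 < Z.of_nat (period a r))%Z) by (unfold period; lia).
  assert (Hmod : forall x, In (x mod Z.of_nat (period a r))%Z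
                              (map Z.of_nat (seq 0 (period a r)))).
  { intros x. apply in_map_iff. exists (Z.to_nat (x mod Z.of_nat (period a r))).
    pose proof (Z.mod_pos_bound x _ HP).
    split; [apply Z2Nat.id; lia|apply in_seq; lia]. }
  apply in_prod; apply Hmod.
Qed.

Definition translate (v p : pt) : pt := (fst p + fst v, snd p + snd v).

Lemma dist_translate (v p q : pt) : dist (translate v p) (translate v q) = dist p q.
Proof. unfold dist, translate; cbn [fst snd]. f_equal. ring. Qed.

Lemma lex_lt_translate (v p q : pt) : lex_lt p q -> lex_lt (translate v p) (translate v q).
Proof. unfold lex_lt, translate; cbn [fst snd]. intros [|[]]; [left; lra|right; split; lra]. Qed.

Lemma translate_inj (v p q : pt) : translate v p = translate v q -> p = q.
Proof.
  destruct p as [x y], q as [x' y']. unfold translate; cbn [fst snd]. intros E.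
  injection E as Ex Ey. f_equal; lra.
Qed.

(* The cells in [cs] are translated onto the cell at [z], the [i]-th one shifted further by
   [i * eps] horizontally, so that distinct cells do not collide for generic [eps]. *)
Section Overlay.
Variables (r : R) (z : pt) (cs : list (Z * Z)).

Definition cell_rank (C : Z * Z) : R := INR (index_of cell_eq_dec C cs).

Definition cell_offset (eps : R) (C : Z * Z) : pt :=
  (fst z - r / 2 * IZR (fst C) + eps * cell_rank C, snd z - r / 2 * IZR (snd C)).

Definition overlay_point (eps : R) (p : pt) : pt := translate (cell_offset eps (cell r p)) p.

(* The only [eps] for which [h] and [h'] from distinct cells are sent to the same point. *)
Definition collision (h h' : pt) : R :=
  (fst h - r / 2 * IZR (fst (cell r h)) - (fst h' - r / 2 * IZR (fst (cell r h'))))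
    / (cell_rank (cell r h') - cell_rank (cell r h)).

Lemma overlay_point_in_box (eps : R) (h : pt) :
  0 < r -> 0 <= eps -> eps * INR (length cs) <= r / 2 -> In (cell r h) cs ->
  in_box z r (overlay_point eps h).
Proof.
  intros Hr Heps Hsmall Hh.
  destruct (Int_part_div_bounds (fst h) (r / 2) ltac:(lra)) as [Hx1 Hx2].
  destruct (Int_part_div_bounds (snd h) (r / 2) ltac:(lra)) as [Hy1 Hy2].
  assert (Hrank : 0 <= eps * cell_rank (cell r h) <= r / 2).
  { destruct (index_of_spec cell_eq_dec (cell r h) (0%Z, 0%Z) cs Hh) as [Hlt _].
    apply lt_INR in Hlt. unfold cell_rank.
    pose proof (pos_INR (index_of cell_eq_dec (cell r h) cs)).
    split; [now apply Rmult_le_pos|].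
    apply (Rle_trans _ (eps * INR (length cs))); [apply Rmult_le_compat_l; lra|exact Hsmall]. }
  unfold overlay_point, cell_offset, translate, cell in *; cbn [fst snd] in *.
  split; apply Rabs_le; cbn [fst snd]; split; lra.
Qed.

Lemma overlay_point_collision (eps : R) (h h' : pt) :
  In (cell r h) cs -> In (cell r h') cs -> overlay_point eps h = overlay_point eps h' ->
  h = h' \/ eps = collision h h'.
Proof.
  intros Hh Hh' E. destruct (cell_eq_dec (cell r h) (cell r h')) as [Ec|Ec].
  - left. unfold overlay_point in E. rewrite Ec in E. exact (translate_inj _ _ _ E).
  - right. assert (Hrank : cell_rank (cell r h) <> cell_rank (cell r h')).
    { intros Er. apply INR_eq in Er. apply Ec.
      rewrite <- (proj2 (index_of_spec cell_eq_dec _ (0%Z, 0%Z) cs Hh)), Er.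
      exact (proj2 (index_of_spec cell_eq_dec _ _ cs Hh')). }
    apply (f_equal fst) in E. unfold overlay_point, cell_offset, translate in E; cbn [fst] in E.
    unfold collision. apply (Rmult_eq_reg_r (cell_rank (cell r h') - cell_rank (cell r h)));
      [|lra].
    field_simplify; lra.
Qed.

Definition tail_offset (eps : R) (E : list (pt * pt)) (t : pt) : pt :=
  match find (fun e => if pt_eq_dec (fst e) t then true else false) E with
  | Some e => cell_offset eps (cell r (snd e))
  | None => (0, 0)
  end.

Lemma tail_offset_spec (a eps : R) (E : list (pt * pt)) (cl : Z * Z) (e : pt * pt) :
  0 < a -> 0 < r ->
  (forall e, In e E -> dist (fst e) (snd e) = a /\ cell_class a r (snd e) = cl) -> In e E ->
  tail_offset eps E (fst e) = cell_offset eps (cell r (snd e)).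
Proof.
  intros Ha Hr HE He. unfold tail_offset. destruct (find _ E) as [e'|] eqn:Ef.
  - apply find_some in Ef as [He' Ht].
    destruct (pt_eq_dec (fst e') (fst e)) as [Et|]; [|discriminate].
    destruct (HE e He) as [Hd Hc]. destruct (HE e' He') as [Hd' Hc'].
    rewrite Et in Hd'.
    now rewrite (cell_eq_of_common_tail a r (fst e) (snd e') (snd e) Ha Hr Hd' Hd
                   ltac:(congruence)).
  - pose proof (find_none _ _ Ef e He) as Hf. cbn beta in Hf.
    now destruct (pt_eq_dec (fst e) (fst e)).
Qed.

End Overlay.

Definition scale (a : R) (p : pt) : pt := (a * fst p, a * snd p).

Lemma dist_scale (a : R) (p q : pt) : 0 < a -> dist (scale a p) (scale a q) = a * dist p q.
Proof.
  intros Ha. pose proof (sqrt_pos ((fst p - fst q)^2 + (snd p - snd q)^2)).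
  apply dist_eq_sqr; [unfold dist; nra|].
  rewrite Rpow_mult_distr, dist_sqr. unfold scale; cbn [fst snd]. ring.
Qed.

Lemma scale_inj (a : R) (p q : pt) : 0 < a -> scale a p = scale a q -> p = q.
Proof.
  intros Ha E. destruct p as [x y], q as [x' y']. unfold scale in E; cbn [fst snd] in E.
  injection E as Ex Ey. apply Rmult_eq_reg_l in Ex, Ey; [now subst|lra|lra].
Qed.

Definition orient (p q : pt) : pt * pt :=
  if excluded_middle_informative (lex_lt p q) then (p, q) else (q, p).

Lemma orient_spec (p q : pt) : p <> q ->
  lex_lt (fst (orient p q)) (snd (orient p q)) /\ (orient p q = (p, q) \/ orient p q = (q, p)).
Proof.
  intros Hne. unfold orient. destruct (excluded_middle_informative (lex_lt p q)) as [Hlt|Hnlt].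
  - split; [exact Hlt|now left].
  - split; [|now right]. destruct (lex_lt_total p q Hne); [contradiction|assumption].
Qed.

Lemma NoDup_list_prod {A B} (l : list A) (l' : list B) :
  NoDup l -> NoDup l' -> NoDup (list_prod l l').
Proof.
  intros Hl Hl'. induction Hl as [|x l Hx _ IH]; cbn; [constructor|].
  apply NoDup_app; [|exact IH|].
  - apply Injective_map_NoDup; [intros y y' E; now injection E|exact Hl'].
  - intros [x' y] Hxy Hin. apply in_map_iff in Hxy as [? [E _]]. injection E as <- _.
    apply in_prod_iff in Hin as [Hin _]. contradiction.
Qed.

Lemma unit_pairs_oriented (a : R) (Q : list pt) : 0 < a -> NoDup Q ->
  exists E : list (pt * pt), NoDup E /\ length E = unit_pairs Q /\
    forall e, In e E -> dist (fst e) (snd e) = a /\ lex_lt (fst e) (snd e) /\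
      In (fst e) (map (scale a) Q) /\ In (snd e) (map (scale a) Q).
Proof.
  intros Ha HQ. set (N := length Q). set (sQ i := scale a (nth i Q (0,0))).
  set (L := filter (fun ij => Nat.ltb (fst ij) (snd ij)
                     && distb (nth (fst ij) Q (0,0)) (nth (snd ij) Q (0,0)) 1)
              (list_prod (seq 0 N) (seq 0 N))).
  assert (HL : forall ij, In ij L -> (fst ij < snd ij < N)%nat /\
                 dist (nth (fst ij) Q (0,0)) (nth (snd ij) Q (0,0)) = 1).
  { intros [i j] Hij. apply filter_In in Hij as [Hin Hb]. apply in_prod_iff in Hin as [Hi Hj].
    apply in_seq in Hi, Hj. apply andb_prop in Hb as [Hlt Hdist].
    apply Nat.ltb_lt in Hlt. unfold distb in Hdist. cbn [fst snd] in *.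
    destruct (Req_EM_T _ _) as [Hd|]; [|discriminate]. split; [lia|exact Hd]. }
  assert (HsQ : forall i j, (i < N)%nat -> (j < N)%nat -> sQ i = sQ j -> i = j).
  { intros i j Hi Hj E. apply scale_inj in E; [|exact Ha].
    now apply (proj1 (NoDup_nth Q (0,0)) HQ). }
  assert (Hne : forall ij, In ij L -> sQ (fst ij) <> sQ (snd ij)).
  { intros ij Hij E. destruct (HL ij Hij) as [Hlt _]. apply HsQ in E; lia. }
  exists (map (fun ij => orient (sQ (fst ij)) (sQ (snd ij))) L). split; [|split].
  - apply Injective_map_NoDup_in; [|apply NoDup_filter, NoDup_list_prod; apply seq_NoDup].
    intros [i j] [i' j'] Hij Hij' E.
    destruct (HL _ Hij) as [Hlt _], (HL _ Hij') as [Hlt' _]. cbn [fst snd] in *.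
    destruct (orient_spec _ _ (Hne _ Hij)) as [_ [E1|E1]],
      (orient_spec _ _ (Hne _ Hij')) as [_ [E2|E2]]; cbn [fst snd] in *;
      rewrite E1, E2 in E;
      pose proof (f_equal fst E) as Ea; pose proof (f_equal snd E) as Eb; cbn [fst snd] in Ea, Eb;
      apply HsQ in Ea, Eb; try lia; now subst.
  - now rewrite length_map.
  - intros e He. apply in_map_iff in He as [[i j] [<- Hij]].
    destruct (HL _ Hij) as [Hlt Hd]. cbn [fst snd] in *.
    assert (Hi : In (sQ i) (map (scale a) Q)) by (unfold sQ; apply in_map, nth_In; lia).
    assert (Hj : In (sQ j) (map (scale a) Q)) by (unfold sQ; apply in_map, nth_In; lia).
    assert (Hdist : dist (sQ i) (sQ j) = a) by (unfold sQ; rewrite dist_scale, Hd; lra).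
    destruct (orient_spec _ _ (Hne _ Hij)) as [Hor [E1|E1]]; cbn [fst snd] in Hor, E1 |- *;
      rewrite E1 in Hor |- *; cbn [fst snd] in Hor |- *; repeat split; try assumption.
    now rewrite dist_sym.
Qed.

Lemma overlay (a r : R) (z : pt) (Qs : list pt) (E : list (pt * pt)) (cl : Z * Z) :
  0 < a -> 0 < r -> NoDup E ->
  (forall e, In e E -> dist (fst e) (snd e) = a /\ lex_lt (fst e) (snd e) /\
     In (fst e) Qs /\ In (snd e) Qs /\ cell_class a r (snd e) = cl) ->
  exists D tails heads, length D = length E /\ NoDup D /\
    length tails = length Qs /\ length heads = length Qs /\
    forall e, In e D -> dist (fst e) (snd e) = a /\ lex_lt (fst e) (snd e) /\
      in_box z r (snd e) /\ In (fst e) tails /\ In (snd e) heads.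
Proof.
  intros Ha Hr HE HEe.
  set (cs := map (fun e => cell r (snd e)) E). set (hs := map snd E).
  assert (Hcell : forall e, In e E -> In (cell r (snd e)) cs)
    by (intros e He; exact (in_map (fun e => cell r (snd e)) _ _ He)).
  destruct (exists_small_not_in (flat_map (fun h => map (collision r cs h) hs) hs)
              (length cs) (r / 2) ltac:(lra)) as [eps [Heps [Hsmall Hbad]]].
  set (mv := overlay_point r z cs eps).
  set (G t := translate (tail_offset r z cs eps E t) t).
  assert (HG : forall e, In e E ->
            G (fst e) = translate (cell_offset r z cs eps (cell r (snd e))) (fst e)).
  { intros e He. unfold G. f_equal. apply (tail_offset_spec r z cs a eps E cl e Ha Hr); [|exact He].
    intros e' He'. destruct (HEe e' He') as [? [_ [_ [_ ?]]]]. now split. }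
  exists (map (fun e => (G (fst e), mv (snd e))) E), (map G Qs), (map mv Qs).
  rewrite !length_map. split; [reflexivity|split; [|split; [reflexivity|split; [reflexivity|]]]].
  - apply Injective_map_NoDup_in; [|exact HE]. intros [t h] [t' h'] He He' Ed.
    pose proof (f_equal fst Ed) as Et. pose proof (f_equal snd Ed) as Eh. cbn [fst snd] in Et, Eh.
    destruct (overlay_point_collision r z cs eps h h' (Hcell _ He) (Hcell _ He') Eh)
      as [<-|Ecol].
    + pose proof (HG _ He) as Gt. pose proof (HG _ He') as Gt'. cbn [fst snd] in Gt, Gt'.
      rewrite Gt, Gt' in Et. now apply translate_inj in Et as ->.
    + exfalso. apply Hbad, in_flat_map. exists h.
      split; [exact (in_map snd _ _ He)|].
      rewrite Ecol. apply in_map. exact (in_map snd _ _ He').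
  - intros x Hx. apply in_map_iff in Hx as [[t h] [<- He]].
    destruct (HEe _ He) as [Hd [Hlt [Ht [Hh _]]]]. pose proof (HG _ He) as Gt.
    cbn [fst snd] in *. rewrite Gt.
    split; [|split; [|split; [|split]]].
    + unfold mv, overlay_point. now rewrite dist_translate.
    + now apply lex_lt_translate.
    + exact (overlay_point_in_box r z cs eps h Hr Heps Hsmall (Hcell _ He)).
    + rewrite <- Gt. now apply in_map.
    + now apply in_map.
Qed.

Lemma unit_pairs_localized (a r : R) (z : pt) (Q : list pt) : 0 < a -> 0 < r -> NoDup Q ->
  exists D tails heads, NoDup D /\ length tails = length Q /\ length heads = length Q /\
    (unit_pairs Q <= period a r ^ 2 * length D)%nat /\
    forall e, In e D -> dist (fst e) (snd e) = a /\ lex_lt (fst e) (snd e) /\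
      in_box z r (snd e) /\ In (fst e) tails /\ In (snd e) heads.
Proof.
  intros Ha Hr HQ.
  destruct (unit_pairs_oriented a Q Ha HQ) as [E [HE [HEl HEe]]].
  destruct (pigeonhole_filter cell_eq_dec (fun e => cell_class a r (snd e)) (cell_classes a r) E)
    as [cl Hcl].
  { intros Hnil. pose proof (cell_class_in a r (0, 0)) as Hin. now rewrite Hnil in Hin. }
  { intros e _. apply cell_class_in. }
  set (Ecl := filter _ E) in Hcl.
  destruct (overlay a r z (map (scale a) Q) Ecl cl Ha Hr (NoDup_filter _ HE))
    as [D [tails [heads [HDl [HD [Htails [Hheads HDe]]]]]]].
  { intros e He. apply filter_In in He as [He Hc].
    destruct (cell_eq_dec (cell_class a r (snd e)) cl) as [Ec|]; [|discriminate].
    destruct (HEe e He) as [H1 [H2 [H3 H4]]]. now repeat split. }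
  rewrite length_map in Htails, Hheads. exists D, tails, heads.
  split; [exact HD|split; [exact Htails|split; [exact Hheads|split; [|exact HDe]]]].
  rewrite <- HEl, HDl, <- length_cell_classes. exact Hcl.
Qed.

Lemma Ck_max_ge_unit_pairs (d : nat -> R) (k n : nat) (Q : list pt) :
  (forall i, 0 < d i) -> (k mod 3 = 1)%nat -> (1 <= n)%nat -> NoDup Q -> (length Q <= n)%nat ->
  (unit_pairs Q * n ^ ((k - 1) / 3)
     <= period (d 0%nat) (rho (d 1%nat) (d 2%nat)) ^ 2 * Ck_max k d n)%nat.
Proof.
  intros Hd Hmod Hn HQ HQn. pose proof (Nat.div_mod_eq k 3) as Hk3.
  set (m := (k / 3)%nat).
  replace ((k - 1) / 3)%nat with m by (rewrite <- (Nat.div_unique (k - 1) 3 m 0); lia).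
  replace k with (3 * m + 1)%nat by lia.
  pose proof (rho_pos _ _ (Hd 1%nat) (Hd 2%nat)) as Hr.
  destruct (unit_pairs_localized (d 0%nat) _ (0, 0) Q (Hd 0%nat) Hr HQ)
    as [D [tails [heads [HD [Htails [Hheads [Hu HDe]]]]]]].
  pose proof (Ck_max_ge_pairs d (0, 0) n m D tails heads Hd Hn ltac:(lia) ltac:(lia) HD HDe)
    as HC.
  apply (Nat.mul_le_mono_r _ _ (n ^ m)) in Hu.
  apply (Nat.mul_le_mono_l _ _ (period (d 0%nat) (rho (d 1%nat) (d 2%nat)) ^ 2)) in HC.
  lia.
Qed.

Lemma Ck_max_positive_extension (k : nat) (delta : nat -> R) :
  (forall i, (i < k)%nat -> 0 < delta i) ->
  exists d, (forall i, 0 < d i) /\ forall n, Ck_max k delta n = Ck_max k d n.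
Proof.
  intros Hpos. exists (fun i => if Nat.ltb i k then delta i else 1). split.
  - intros i. destruct (Nat.ltb_spec i k); [now apply Hpos|lra].
  - intros n. apply Ck_max_ext. intros i Hi. destruct (Nat.ltb_spec i k); [reflexivity|lia].
Qed.

Lemma u2_attained (n : nat) : exists Q, NoDup Q /\ (length Q <= n)%nat /\ unit_pairs Q = u2 n.
Proof.
  unfold u2.
  destruct (maxnat_spec (fun m => exists Q, NoDup Q /\ (length Q <= n)%nat /\ unit_pairs Q = m)
              (n * n)) as [HQ _]; [| |exact HQ].
  - exists 0%nat, []. split; [constructor|split; [cbn; lia|reflexivity]].
  - intros m [Q [_ [HQn <-]]]. unfold unit_pairs.
    eapply Nat.le_trans; [apply filter_length_le|].
    rewrite length_prod, length_seq. now apply Nat.mul_le_mono.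
Qed.

Theorem proposition3p1 (k : nat) (delta : nat -> R) :
  (1 <= k)%nat ->
  (forall i, (i < k)%nat -> 0 < delta i) ->
  ((Nat.modulo k 3 = 0%nat \/ Nat.modulo k 3 = 2%nat) ->
     exists c : R, 0 < c /\ exists N : nat, forall n : nat, (N <= n)%nat ->
       c * INR (n ^ (Nat.div (k + 1) 3 + 1)) <= INR (Ck_max k delta n))
  /\
  (Nat.modulo k 3 = 1%nat ->
     exists c : R, 0 < c /\ exists N : nat, forall n : nat, (N <= n)%nat ->
       c * (INR (n ^ Nat.div (k - 1) 3) * INR (u2 n)) <= INR (Ck_max k delta n)).
Proof.
  intros Hk Hpos.
  destruct (Ck_max_positive_extension k delta Hpos) as [d [Hd Hmax]].
  split.
  - intros Hmod. exists 1. split; [lra|]. exists 1%nat. intros n Hn.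
    rewrite Rmult_1_l, Hmax. apply le_INR. exact (Ck_max_ge_pow d k n Hd Hk Hmod Hn).
  - intros Hmod. set (P := period (d 0%nat) (rho (d 1%nat) (d 2%nat))).
    assert (HP : 0 < INR (P ^ 2)) by (apply lt_0_INR; unfold P, period; cbn; lia).
    exists (/ INR (P ^ 2)). split; [now apply Rinv_0_lt_compat|]. exists 1%nat. intros n Hn.
    destruct (u2_attained n) as [Q [HQ [HQn <-]]].
    pose proof (Ck_max_ge_unit_pairs d k n Q Hd Hmod Hn HQ HQn) as HC.
    fold P in HC. rewrite <- Hmax in HC. apply le_INR in HC. rewrite !mult_INR in HC.
    apply (Rmult_le_reg_l (INR (P ^ 2))); [exact HP|].
    rewrite <- Rmult_assoc, Rinv_r by lra. lra.
Qed.
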